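(* For $\varepsilon\in[0,1]$ and $\lambda\in\mathbb R$ consider on $\Omega=\mathbb S^1=\mathbb R/(2\pi\mathbb Z)$ with flow $\sigma(t,s)=s+t$ the family $$x'=\varepsilon x+\cos(s+t)-x|x|+\lambda,\qquad s\in\mathbb S^1,$$ with skewproduct flow $\tau^\lambda_\varepsilon$ and global attractor $\mathcal A^\lambda_\varepsilon=\bigcup_s\{s\}\times[\mathfrak l^\lambda_\varepsilon(s),\mathfrak u^\lambda_\varepsilon(s)]$. There exists $\varepsilon_0\in(0,1]$ such that for every $\varepsilon\in[0,\varepsilon_0)$: $\mathcal A^\lambda_\varepsilon$ is an attractive hyperbolic $\tau^\lambda_\varepsilon$-copy of the base for every $\lambda\in\mathbb R$, $\mathcal A^\lambda_\varepsilon=\{\mathfrak l^\lambda_\varepsilon\}$; the map $\mathbb R\to C(\mathbb S^1,\mathbb R)$, $\lambda\mapsto\mathfrak l^\lambda_\varepsilon$, is strictly increasing; and $\lim_{\lambda\to\pm\infty}\mathfrak l^\lambda_\varepsilon(s)=\pm\infty$ uniformly on $\mathbb S^1$.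
   Context: The global attractor of a skewproduct flow $\tau(t,s,x)=(s+t,v(t,s,x))$ on $\mathbb S^1\times\mathbb R$ is the compact invariant set attracting every bounded set forward in time (here it exists and is the union of bounded orbits). A $\tau$-copy of the base is the graph of a continuous $\mathfrak b:\mathbb S^1\to\mathbb R$ with $v(t,s,\mathfrak b(s))=\mathfrak b(s+t)$; it is attractive hyperbolic if there are $\rho>0,k\ge1,\gamma>0$ such that $|x-\mathfrak b(s)|<\rho$ implies $|v(t,s,x)-\mathfrak b(s+t)|\le ke^{-\gamma t}|x-\mathfrak b(s)|$ for all $t\ge0$. *)

From Stdlib Require Import Reals Lra.
From Coquelicot Require Import Coquelicot.
Open Scope R_scope.

(* The circle S^1 = R/(2 pi Z) is represented by R; functions on S^1 are
   2*PI-periodic functions on R. The base flow is sigma(t,s) = s + t. *)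

Definition rhs (eps lam : R) (s x : R) : R :=
  eps * x + cos s - x * Rabs x + lam.

Definition fwd_solution (eps lam s : R) (y : R -> R) : Prop :=
  forall t, 0 <= t -> is_derive y t (rhs eps lam (s + t) (y t)).

Definition entire_solution (eps lam s : R) (y : R -> R) : Prop :=
  forall t, is_derive y t (rhs eps lam (s + t) (y t)).

(* Global attractor: union of the bounded (entire) orbits.
   (s,x) is in A iff the orbit through (s,x) is defined and bounded on R. *)
Definition in_attractor (eps lam s x : R) : Prop :=
  exists y : R -> R, entire_solution eps lam s y /\ y 0 = x /\
    exists M, forall t, Rabs (y t) <= M.

Definition lowerb (eps lam : R) (s : R) : R :=
  real (Glb_Rbar (fun x => in_attractor eps lam s x)).

(* b : S^1 -> R continuous, and its graph is tau-invariant: v(t,s,b s) = b(s+t). *)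
Definition tau_copy (eps lam : R) (b : R -> R) : Prop :=
  (forall s, b (s + 2 * PI) = b s) /\
  (forall s, continuous b s) /\
  (forall s, entire_solution eps lam s (fun t => b (s + t))).

Definition attr_hyperbolic (eps lam : R) (b : R -> R) : Prop :=
  tau_copy eps lam b /\
  exists rho k gamma : R, 0 < rho /\ 1 <= k /\ 0 < gamma /\
    forall s (y : R -> R), fwd_solution eps lam s y ->
      Rabs (y 0 - b s) < rho ->
      forall t, 0 <= t ->
        Rabs (y t - b (s + t)) <= k * exp (- gamma * t) * Rabs (y 0 - b s).

(* The box |x| <= |lam| + 3 is forward invariant, so after clipping the
   nonlinearity outside it the equation has global solutions (Picard iteration)
   and the period map has a fixed point: a 2 PI-periodic solution b.  Since
   (y - x)(y|y| - x|x|) >= 2/3 (y - x)^2 |x|, squared distances to b contract at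
   rate 4/3 |b| - 2 eps.  The mean of |b| over a period is bounded below
   uniformly in lam, so for small eps the rate has positive mean, and an
   exponential weight turns this into uniform exponential attraction.  Hence b is
   attractive hyperbolic and is the only bounded entire solution, so the attractor
   is its graph and l = b.  Comparing the periodic solutions for two values of
   lam gives strict monotonicity, and the sign of the vector field at an extremum
   of b gives the limits. *)

From Stdlib Require Import Reals ZArith Lra Lia Classical FunctionalExtensionality.
From Coquelicot Require Import Coquelicot.
Open Scope R_scope.

(** * Calculus on the real line *)

Lemma Rabs_mult_self (x : R) : Rabs x * Rabs x = x * x.
Proof. rewrite <- Rabs_mult. apply Rabs_right, Rle_ge, Rle_0_sqr. Qed.

Lemma Rabs_le_of_sqr_le (a b : R) : 0 <= b -> a * a <= b * b -> Rabs a <= b.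
Proof. intros Hb H. rewrite <- Rabs_mult_self in H. pose proof (Rabs_pos a). nra. Qed.

Lemma exp_le_exp (x y : R) : x <= y -> exp x <= exp y.
Proof. intros [H | ->]; [apply Rlt_le, exp_increasing | ]; lra. Qed.

Lemma exp_mult_exp_opp (x : R) : exp x * exp (- x) = 1.
Proof. rewrite <- exp_plus, Rplus_opp_r. apply exp_0. Qed.

Lemma is_derive_of_remainder_le (f : R -> R) (x l C : R) :
  (forall h, Rabs (f (x + h) - f x - l * h) <= C * (h * h)) -> is_derive f x l.
Proof.
  intros Hrem. apply is_derive_Reals. intros eps Heps.
  assert (HC : 0 <= C).
  { specialize (Hrem 1). pose proof (Rabs_pos (f (x + 1) - f x - l * 1)). nra. }
  assert (Hd : 0 < eps / (C + 1)) by (apply Rdiv_lt_0_compat; lra).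
  exists (mkposreal _ Hd). intros h Hh0 Hh. simpl in Hh.
  assert (Hh' : 0 < Rabs h) by (apply Rabs_pos_lt; auto).
  replace ((f (x + h) - f x) / h - l) with ((f (x + h) - f x - l * h) / h)
    by (field; auto).
  rewrite Rabs_div by auto. apply Rlt_div_l; auto.
  apply Rlt_div_r in Hh; [|lra].
  specialize (Hrem h). rewrite <- Rabs_mult_self in Hrem. nra.
Qed.

Lemma continuity_pt_of_is_derive (f : R -> R) (x l : R) : is_derive f x l -> continuity_pt f x.
Proof.
  intros H. apply continuity_pt_filterlim.
  apply (ex_derive_continuous f x). now exists l.
Qed.

Lemma continuity_pt_of_lipschitz (f : R -> R) (x C : R) :
  (forall y, Rabs (f y - f x) <= C * Rabs (y - x)) -> continuity_pt f x.
Proof.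
  intros H eps Heps.
  assert (HC : 0 <= C).
  { specialize (H (x + 1)). replace (x + 1 - x) with 1 in H by ring.
    rewrite Rabs_R1 in H. pose proof (Rabs_pos (f (x + 1) - f x)). lra. }
  exists (eps / (C + 1)). split; [apply Rdiv_lt_0_compat; lra|].
  intros y [_ Hy]. simpl in *. unfold R_dist in *.
  apply Rlt_div_r in Hy; [|lra].
  specialize (H y). pose proof (Rabs_pos (y - x)). nra.
Qed.

Lemma le_of_is_derive_nonneg (f f' : R -> R) (a b : R) :
  a <= b ->
  (forall t, a <= t <= b -> is_derive f t (f' t)) ->
  (forall t, a <= t <= b -> 0 <= f' t) -> f a <= f b.
Proof.
  intros Hab Hd Hpos.
  destruct (MVT_gen f a b f') as [c [Hc Heq]];
    rewrite ?Rmin_left, ?Rmax_right in * by lra.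
  - intros x Hx. apply Hd. lra.
  - intros x Hx. eapply continuity_pt_of_is_derive, Hd, Hx.
  - specialize (Hpos c Hc). nra.
Qed.

Lemma Rabs_sub_le_of_is_derive_dominated (f f' g g' : R -> R) (a b : R) :
  a <= b ->
  (forall t, a <= t <= b -> is_derive f t (f' t)) ->
  (forall t, a <= t <= b -> is_derive g t (g' t)) ->
  (forall t, a <= t <= b -> Rabs (f' t) <= g' t) -> Rabs (f b - f a) <= g b - g a.
Proof.
  intros Hab Hf Hg Hdom.
  assert (Hminus : g a - f a <= g b - f b).
  { apply (le_of_is_derive_nonneg (fun t => g t - f t) (fun t => g' t - f' t)); auto.
    - intros t Ht. apply (is_derive_minus g f); auto.
    - intros t Ht. specialize (Hdom t Ht). apply Rabs_le_between in Hdom. lra. }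
  assert (Hplus : g a + f a <= g b + f b).
  { apply (le_of_is_derive_nonneg (fun t => g t + f t) (fun t => g' t + f' t)); auto.
    - intros t Ht. apply (is_derive_plus g f); auto.
    - intros t Ht. specialize (Hdom t Ht). apply Rabs_le_between in Hdom. lra. }
  apply Rabs_le_between. lra.
Qed.

Lemma Rabs_sub_le_of_is_derive_le (f f' : R -> R) (a b M : R) :
  (forall t, Rmin a b <= t <= Rmax a b -> is_derive f t (f' t)) ->
  (forall t, Rmin a b <= t <= Rmax a b -> Rabs (f' t) <= M) ->
  Rabs (f b - f a) <= M * Rabs (b - a).
Proof.
  intros Hd HM. destruct (MVT_abs f f' a b) as [c [-> Hc]].
  - intros c Hc. apply is_derive_Reals, Hd, Hc.
  - apply Rmult_le_compat_r; [apply Rabs_pos | auto].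
Qed.

Lemma is_derive_eq_0_at_max (f : R -> R) (x l : R) :
  is_derive f x l -> (forall y, f y <= f x) -> l = 0.
Proof.
  intros Hd Hmax. apply is_derive_Reals in Hd.
  destruct (Req_dec l 0) as [|Hl]; auto. exfalso.
  destruct (Hd (Rabs l / 2)) as [d Hdd]; [apply Rabs_pos_lt in Hl; lra|].
  pose proof (cond_pos d) as Hdpos.
  set (h := if Rle_dec 0 l then d / 2 else - (d / 2)).
  assert (Hh : h <> 0 /\ Rabs h < d) by
    (unfold h; destruct (Rle_dec 0 l); rewrite ?Rabs_Ropp, Rabs_right; lra).
  specialize (Hdd h (proj1 Hh) (proj2 Hh)). specialize (Hmax (x + h)).
  assert (Hq : f (x + h) - f x = (f (x + h) - f x) / h * h) by (field; apply Hh).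
  apply Rabs_lt_between in Hdd.
  unfold h in *; destruct (Rle_dec 0 l).
  - rewrite Rabs_right in Hdd by lra. nra.
  - rewrite Rabs_left in Hdd by lra. nra.
Qed.

Lemma is_derive_shift (f : R -> R) (c t l : R) :
  is_derive f (c + t) l -> is_derive (fun t => f (c + t)) t l.
Proof.
  intros H. replace l with (scal 1 l) by (unfold scal; simpl; unfold mult; simpl; ring).
  apply (is_derive_comp f (fun t => c + t)); auto. auto_derive; auto; ring.
Qed.

Lemma is_derive_reflect (f : R -> R) (t l : R) :
  is_derive f (- t) l -> is_derive (fun t => f (- t)) t (- l).
Proof.
  intros H. replace (- l) with (scal (-1) l) by (unfold scal; simpl; unfold mult; simpl; ring).
  apply (is_derive_comp f (fun t => - t)); auto. auto_derive; auto; ring.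
Qed.

Lemma is_derive_sqr (y : R -> R) (t y' : R) :
  is_derive y t y' -> is_derive (fun t => y t * y t) t (2 * y t * y').
Proof.
  intros H. replace (2 * y t * y') with (plus (mult y' (y t)) (mult (y t) y'))
    by (unfold plus, mult; simpl; ring).
  apply (is_derive_mult y y); auto. intros; unfold mult; simpl; ring.
Qed.

Lemma is_derive_mult_exp (w p : R -> R) (t w' p' : R) :
  is_derive w t w' -> is_derive p t p' ->
  is_derive (fun t => w t * exp (p t)) t ((w' + w t * p') * exp (p t)).
Proof.
  intros Hw Hp.
  assert (He : is_derive (fun t => exp (p t)) t (p' * exp (p t))).
  { replace (p' * exp (p t)) with (scal p' (exp (p t))) by reflexivity.
    apply (is_derive_comp exp p); auto. auto_derive; auto; ring. }
  replace ((w' + w t * p') * exp (p t)) with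
    (plus (mult w' (exp (p t))) (mult (w t) (p' * exp (p t))))
    by (unfold plus, mult; simpl; ring).
  apply (is_derive_mult w (fun t => exp (p t))); auto.
  intros; unfold mult; simpl; ring.
Qed.

Lemma exp_weighted_le (w w' p p' : R -> R) (a b : R) :
  a <= b ->
  (forall t, a <= t <= b -> is_derive w t (w' t)) ->
  (forall t, a <= t <= b -> is_derive p t (p' t)) ->
  (forall t, a <= t <= b -> w' t <= - w t * p' t) ->
  w b * exp (p b) <= w a * exp (p a).
Proof.
  intros Hab Hw Hp Hineq. apply Ropp_le_cancel.
  apply (le_of_is_derive_nonneg (fun t => - (w t * exp (p t)))
    (fun t => - ((w' t + w t * p' t) * exp (p t)))); auto.
  - intros t Ht. apply (is_derive_opp (fun t => w t * exp (p t))).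
    apply is_derive_mult_exp; auto.
  - intros t Ht. specialize (Hineq t Ht). pose proof (exp_pos (p t)). nra.
Qed.

Lemma le_0_of_le_exp (a C g : R) :
  0 < g -> (forall t, t <= 0 -> a <= C * exp (g * t)) -> a <= 0.
Proof.
  intros Hg H. destruct (Rle_dec a 0) as [|Ha]; auto. exfalso.
  assert (HC : 0 < C).
  { specialize (H 0 (Rle_refl 0)). rewrite Rmult_0_r, exp_0 in H. lra. }
  assert (Hx : 0 < C / a) by (apply Rdiv_lt_0_compat; lra).
  specialize (H (- (C / a) / g)).
  replace (g * (- (C / a) / g)) with (- (C / a)) in H by (field; lra).
  rewrite exp_Ropp in H.
  assert (Hle : a <= C * / exp (C / a)).
  { apply H. assert (0 < C / a / g) by (apply Rdiv_lt_0_compat; lra). lra. }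
  pose proof (exp_ineq1_le (C / a)). pose proof (exp_pos (C / a)).
  apply (Rmult_le_compat_r (exp (C / a))) in Hle; [|lra].
  rewrite Rmult_assoc, Rinv_l in Hle by lra.
  assert (a * (1 + C / a) = a + C) by (field; lra). nra.
Qed.

Lemma le_of_le_geometric (a b Q : R) : (forall n, a <= b + Q * (/ 2) ^ n) -> a <= b.
Proof.
  intros H. destruct (Rle_dec a b) as [|Hab]; auto. exfalso.
  destruct (Rle_dec Q 0).
  - specialize (H 0%nat). simpl in H. lra.
  - destruct (pow_lt_1_zero (/ 2)) with (y := (a - b) / Q) as [N HN].
    + rewrite Rabs_right; lra.
    + apply Rdiv_lt_0_compat; lra.
    + specialize (HN N (Nat.le_refl N)). specialize (H N).
      assert (0 < (/ 2) ^ N) by (apply pow_lt; lra).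
      rewrite Rabs_right in HN by lra.
      apply Rlt_div_r in HN; [|lra]. nra.
Qed.

Lemma periodic_nat (f : R -> R) (T : R) :
  (forall u, f (u + T) = f u) ->
  forall n u, f (u + INR n * T) = f u /\ f (u - INR n * T) = f u.
Proof.
  intros Hper n. induction n as [|n IH]; intros u.
  - simpl. rewrite Rmult_0_l, Rplus_0_r, Rminus_0_r. auto.
  - rewrite S_INR. split.
    + replace (u + (INR n + 1) * T) with ((u + INR n * T) + T) by ring.
      rewrite Hper. apply IH.
    + destruct (IH (u - (INR n + 1) * T)) as [H1 _].
      replace (u - (INR n + 1) * T + INR n * T) with (u - T) in H1 by ring.
      rewrite <- H1, <- (Hper (u - T)). f_equal. ring.
Qed.

Lemma periodic_reduce (f : R -> R) (T : R) :
  0 < T -> (forall u, f (u + T) = f u) ->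
  forall u, exists r, 0 <= r <= T /\ f u = f r.
Proof.
  intros HT Hper u.
  destruct (archimed (u / T)) as [H1 H2].
  set (z := (up (u / T) - 1)%Z).
  assert (Hz : IZR z = IZR (up (u / T)) - 1) by (unfold z; rewrite minus_IZR; auto).
  exists (u - IZR z * T). split.
  - assert (u / T * T = u) by (field; lra). split; nra.
  - destruct (Z_le_gt_dec 0 z) as [Hz0|Hz0].
    + rewrite <- (Z2Nat.id z Hz0), <- INR_IZR_INZ.
      symmetry. apply (periodic_nat f T Hper).
    + replace (IZR z) with (- IZR (- z)) by (rewrite opp_IZR; ring).
      rewrite <- (Z2Nat.id (- z)), <- INR_IZR_INZ by lia.
      replace (u - - INR (Z.to_nat (- z)) * T) with (u + INR (Z.to_nat (- z)) * T) by ring.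
      symmetry. apply (periodic_nat f T Hper).
Qed.

Lemma periodic_le_of_is_derive_nonpos (f f' : R -> R) (T : R) :
  0 < T -> (forall u, f (u + T) = f u) ->
  (forall t, is_derive f t (f' t)) -> (forall t, f' t <= 0) -> forall s t, f t <= f s.
Proof.
  intros HT Hper Hd Hneg s t.
  destruct (periodic_reduce (fun r => f (s + r)) T HT) with (u := t - s) as [r [Hr Hfr]].
  { intros u. rewrite <- (Hper (s + u)). f_equal. ring. }
  replace (s + (t - s)) with t in Hfr by ring. rewrite Hfr.
  apply Ropp_le_cancel.
  replace s with (s + 0) at 1 by ring.
  apply (le_of_is_derive_nonneg (fun r => - f (s + r)) (fun r => - f' (s + r))); try lra.
  - intros x _. apply (is_derive_opp (fun r => f (s + r))), is_derive_shift, Hd.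
  - intros x _. specialize (Hneg (s + x)). lra.
Qed.

(* [pos_sqr x = (Rmax x 0)^2], written so that its derivative [x + Rabs x] is explicit. *)
Definition pos_sqr (x : R) : R := (x * x + x * Rabs x) / 2.

Lemma mult_Rabs_remainder (x h : R) :
  Rabs ((x + h) * Rabs (x + h) - x * Rabs x - 2 * Rabs x * h) <= h * h.
Proof.
  apply Rabs_le.
  destruct (Rle_dec 0 x), (Rle_dec 0 (x + h));
    rewrite ?(Rabs_right x), ?(Rabs_left x), ?(Rabs_right (x + h)), ?(Rabs_left (x + h))
      by lra; split; nra.
Qed.

Lemma is_derive_pos_sqr (f : R -> R) (t l : R) : is_derive f t l ->
  is_derive (fun t => pos_sqr (f t)) t ((f t + Rabs (f t)) * l).
Proof.
  intros Hf.
  assert (Hd : is_derive pos_sqr (f t) (f t + Rabs (f t))).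
  { apply (is_derive_of_remainder_le _ _ _ 1). intros h. unfold pos_sqr.
    pose proof (mult_Rabs_remainder (f t) h) as Hrem.
    apply Rabs_le_between in Hrem. apply Rabs_le_between. split; nra. }
  replace ((f t + Rabs (f t)) * l) with (scal l (f t + Rabs (f t)))
    by (unfold scal; simpl; unfold mult; simpl; ring).
  apply (is_derive_comp pos_sqr f); auto.
Qed.

Lemma pos_sqr_ge_0 (x : R) : 0 <= pos_sqr x.
Proof.
  unfold pos_sqr. destruct (Rle_dec 0 x);
    [rewrite Rabs_right | rewrite Rabs_left]; nra.
Qed.

Lemma pos_sqr_of_nonpos (x : R) : x <= 0 -> pos_sqr x = 0.
Proof.
  intros Hx. unfold pos_sqr. destruct (Req_dec x 0) as [->|].
  - rewrite Rabs_R0. lra.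
  - rewrite Rabs_left by lra. lra.
Qed.

Lemma pos_sqr_of_nonneg (x : R) : 0 <= x -> pos_sqr x = x * x.
Proof. intros Hx. unfold pos_sqr. rewrite Rabs_right by lra. lra. Qed.

Lemma nonpos_of_pos_sqr_le_0 (x : R) : pos_sqr x <= 0 -> x <= 0.
Proof.
  intros H. destruct (Rle_dec x 0); auto.
  rewrite pos_sqr_of_nonneg in H by lra. nra.
Qed.

Lemma periodic_ge_of_is_derive_pos (b b' : R -> R) (T M : R) :
  0 < T -> (forall u, b (u + T) = b u) -> (forall t, is_derive b t (b' t)) ->
  (forall t, b t < M -> 0 < b' t) -> forall s, M <= b s.
Proof.
  intros HT Hper Hd Hpos s.
  set (w' := fun t => (M - b t + Rabs (M - b t)) * (0 - b' t)).
  assert (Hw : forall t, is_derive (fun t => pos_sqr (M - b t)) t (w' t)).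
  { intros t. apply (is_derive_pos_sqr (fun t => M - b t)).
    apply (is_derive_minus (fun _ => M) b); [auto_derive; auto | auto]. }
  assert (Hw'lt : forall t, b t < M -> w' t < 0).
  { intros t Ht. unfold w'. rewrite Rabs_right by lra. specialize (Hpos t Ht). nra. }
  assert (Hw'le : forall t, w' t <= 0).
  { intros t. destruct (Rlt_dec (b t) M) as [Ht|Ht].
    - specialize (Hw'lt t Ht). lra.
    - unfold w'. rewrite Rabs_left1 by lra. lra. }
  assert (Hmax := periodic_le_of_is_derive_nonpos (fun t => pos_sqr (M - b t)) _ T HT
    ltac:(intros u; simpl; now rewrite Hper) Hw Hw'le s).
  destruct (Rle_dec M (b s)) as [|Hlt]; auto.
  assert (Hw's := Hw'lt s ltac:(lra)).
  rewrite (is_derive_eq_0_at_max _ s _ (Hw s) Hmax) in Hw's. lra.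
Qed.

Lemma le_of_is_derive_nonpos_above (f f' : R -> R) (M : R) :
  (forall t, 0 <= t -> is_derive f t (f' t)) ->
  (forall t, 0 <= t -> M < f t -> f' t <= 0) ->
  f 0 <= M -> forall t, 0 <= t -> f t <= M.
Proof.
  intros Hd Hneg H0 t Ht.
  apply Rminus_le, nonpos_of_pos_sqr_le_0.
  rewrite <- (pos_sqr_of_nonpos (f 0 - M)) by lra.
  apply Ropp_le_cancel.
  apply (le_of_is_derive_nonneg (fun t => - pos_sqr (f t - M))
    (fun t => - ((f t - M + Rabs (f t - M)) * (f' t - 0)))); auto.
  - intros s Hs. apply (is_derive_opp (fun t => pos_sqr (f t - M))).
    apply (is_derive_pos_sqr (fun t => f t - M)).
    apply (is_derive_minus f (fun _ => M)); [apply Hd; lra | auto_derive; auto].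
  - intros s Hs. destruct (Rle_dec (f s - M) 0).
    + rewrite Rabs_left1 by lra. lra.
    + rewrite Rabs_right by lra. specialize (Hneg s ltac:(lra) ltac:(lra)). nra.
Qed.

Lemma Rabs_le_of_is_derive_le_exp (h h' : R -> R) (L D : R) :
  0 < L -> h 0 = 0 -> (forall t, is_derive h t (h' t)) ->
  (forall t, Rabs (h' t) <= L * D * exp (2 * L * Rabs t)) ->
  forall t, Rabs (h t) <= D / 2 * exp (2 * L * Rabs t).
Proof.
  intros HL H0 Hd Hb t.
  assert (HD : 0 <= D).
  { specialize (Hb 0). rewrite Rabs_R0, Rmult_0_r, exp_0 in Hb.
    pose proof (Rabs_pos (h' 0)). nra. }
  destruct (Rle_dec 0 t).
  - rewrite (Rabs_right t) by lra.
    assert (Hdom := Rabs_sub_le_of_is_derive_dominated h h'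
      (fun u => D / 2 * exp (2 * L * u)) (fun u => L * D * exp (2 * L * u)) 0 t r).
    rewrite H0, Rminus_0_r, Rmult_0_r, exp_0 in Hdom.
    enough (Rabs (h t) <= D / 2 * exp (2 * L * t) - D / 2 * 1) by lra.
    apply Hdom; intros u Hu; auto.
    + auto_derive; auto. field.
    + specialize (Hb u). rewrite (Rabs_right u) in Hb by lra. auto.
  - rewrite (Rabs_left t) by lra.
    assert (Hdom := Rabs_sub_le_of_is_derive_dominated h h'
      (fun u => - (D / 2) * exp (- (2 * L * u))) (fun u => L * D * exp (- (2 * L * u))) t 0
      ltac:(lra)).
    rewrite H0, Rmult_0_r, Ropp_0, exp_0, Rminus_0_l, Rabs_Ropp in Hdom.
    replace (2 * L * - t) with (- (2 * L * t)) by ring.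
    enough (Rabs (h t) <= - (D / 2) * 1 - - (D / 2) * exp (- (2 * L * t))) by lra.
    apply Hdom; intros u Hu; auto.
    + auto_derive; auto. field.
    + specialize (Hb u). rewrite (Rabs_left1 u) in Hb by lra.
      replace (- (2 * L * u)) with (2 * L * - u) by ring. auto.
Qed.

(** * Global solutions and continuous dependence *)

Lemma is_derive_RInt_0 (f : R -> R) (t : R) :
  (forall z, continuous f z) -> is_derive (fun t => RInt f 0 t) t (f t).
Proof.
  intros Hc. apply (is_derive_RInt f (fun t => RInt f 0 t) 0 t); auto.
  apply filter_forall. intros b. apply (RInt_correct f 0 b).
  apply ex_RInt_continuous. intros; apply Hc.
Qed.

Section Picard.

Variables (F : R -> R -> R) (B L Lu : R).
Hypothesis L_pos : 0 < L.
Hypothesis F_bounded : forall u x, Rabs (F u x) <= B.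
Hypothesis F_lipschitz : forall u x y, Rabs (F u x - F u y) <= L * Rabs (x - y).
Hypothesis F_lipschitz_time : forall u v x, Rabs (F u x - F v x) <= Lu * Rabs (u - v).
Variable x0 : R.

Let B_nonneg : 0 <= B.
Proof. pose proof (F_bounded 0 0) as H. pose proof (Rabs_pos (F 0 0)). lra. Qed.

Let Lu_nonneg : 0 <= Lu.
Proof.
  pose proof (F_lipschitz_time 1 0 0) as H. rewrite Rminus_0_r, Rabs_R1 in H.
  pose proof (Rabs_pos (F 1 0 - F 0 0)). lra.
Qed.

Let bound_weight_nonneg (t : R) : 0 <= B / L * exp (2 * L * Rabs t).
Proof.
  apply Rmult_le_pos; [apply Rdiv_le_0_compat; [apply B_nonneg | apply L_pos]|].
  apply Rlt_le, exp_pos.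
Qed.

Fixpoint picard (n : nat) : R -> R :=
  match n with
  | O => fun _ => x0
  | S m => fun t => x0 + RInt (fun v => F v (picard m v)) 0 t
  end.

Lemma picard_at_0 (n : nat) : picard n 0 = x0.
Proof. destruct n; simpl; auto. rewrite RInt_point. unfold zero; simpl. ring. Qed.

Lemma F_comp_lipschitz (p : R -> R) :
  (forall t s, Rabs (p t - p s) <= B * Rabs (t - s)) ->
  forall u v, Rabs (F v (p v) - F u (p u)) <= (Lu + L * B) * Rabs (v - u).
Proof.
  intros Hp u v.
  replace (F v (p v) - F u (p u)) with ((F v (p v) - F u (p v)) + (F u (p v) - F u (p u)))
    by ring.
  eapply Rle_trans; [apply Rabs_triang|].
  specialize (F_lipschitz_time v u (p v)). specialize (F_lipschitz u (p v) (p u)).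
  specialize (Hp v u). pose proof L_pos. nra.
Qed.

Lemma is_derive_picard_of_lipschitz (n : nat) :
  (forall t s, Rabs (picard n t - picard n s) <= B * Rabs (t - s)) ->
  forall t, is_derive (picard (S n)) t (F t (picard n t)).
Proof.
  intros Hlip t. replace (F t (picard n t)) with (0 + F t (picard n t)) by ring.
  apply (is_derive_plus (fun _ => x0) (fun t => RInt (fun v => F v (picard n v)) 0 t));
    [auto_derive; auto|].
  apply (is_derive_RInt_0 (fun v => F v (picard n v))). intros z.
  apply continuity_pt_filterlim, (continuity_pt_of_lipschitz _ _ (Lu + L * B)).
  intros y. apply F_comp_lipschitz; auto.
Qed.

Lemma picard_lipschitz (n : nat) (t s : R) :
  Rabs (picard n t - picard n s) <= B * Rabs (t - s).
Proof.
  revert t s. induction n as [|n IH]; intros t s.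
  - simpl. rewrite Rminus_eq_0, Rabs_R0.
    apply Rmult_le_pos; [apply B_nonneg | apply Rabs_pos].
  - rewrite Rabs_minus_sym, (Rabs_minus_sym t).
    apply (Rabs_sub_le_of_is_derive_le _ (fun t => F t (picard n t))).
    + intros u _. apply is_derive_picard_of_lipschitz, IH.
    + intros u _. apply F_bounded.
Qed.

Lemma is_derive_picard (n : nat) (t : R) :
  is_derive (picard (S n)) t (F t (picard n t)).
Proof. apply is_derive_picard_of_lipschitz, picard_lipschitz. Qed.

(* The weight [exp (2 L |t|)] makes each Picard step contract by [1/2] on the
   whole line. *)
Lemma picard_increment_le (n : nat) (t : R) :
  Rabs (picard (S n) t - picard n t) <= B / (2 * L) * (/ 2) ^ n * exp (2 * L * Rabs t).
Proof.
  revert t. induction n as [|n IH]; intros t.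
  - simpl pow. rewrite Rmult_1_r.
    pose proof (picard_lipschitz 1 t 0) as H1.
    rewrite picard_at_0, Rminus_0_r in H1. simpl picard at 2.
    eapply Rle_trans; [apply H1|].
    pose proof (exp_ineq1_le (2 * L * Rabs t)). pose proof (Rabs_pos t).
    replace (B * Rabs t) with (B / (2 * L) * (2 * L * Rabs t)) by (field; lra).
    apply Rmult_le_compat_l; [|lra]. apply Rdiv_le_0_compat; [apply B_nonneg | lra].
  - replace (B / (2 * L) * (/ 2) ^ S n) with (B / (2 * L) * (/ 2) ^ n / 2)
      by (simpl; field; lra).
    apply (Rabs_le_of_is_derive_le_exp (fun t => picard (S (S n)) t - picard (S n) t)
      (fun t => F t (picard (S n) t) - F t (picard n t))); auto.
    + rewrite !picard_at_0. ring.
    + intros s. apply (is_derive_minus (picard (S (S n))) (picard (S n)));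
        apply is_derive_picard.
    + intros s. eapply Rle_trans; [apply F_lipschitz|].
      rewrite !Rmult_assoc. apply Rmult_le_compat_l; [lra|].
      rewrite <- !Rmult_assoc. apply IH.
Qed.

Lemma picard_cauchy (n j : nat) (t : R) :
  Rabs (picard (n + j) t - picard n t) <=
    B / L * (/ 2) ^ n * (1 - (/ 2) ^ j) * exp (2 * L * Rabs t).
Proof.
  induction j as [|j IH].
  - rewrite Nat.add_0_r, Rminus_eq_0, Rabs_R0. simpl. lra.
  - replace (n + S j)%nat with (S (n + j)) by lia.
    pose proof (picard_increment_le (n + j) t) as H1. rewrite pow_add in H1.
    replace (picard (S (n + j)) t - picard n t) with
      ((picard (S (n + j)) t - picard (n + j) t) + (picard (n + j) t - picard n t)) by ring.
    eapply Rle_trans; [apply Rabs_triang|].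
    replace (B / L * (/ 2) ^ n * (1 - (/ 2) ^ S j) * exp (2 * L * Rabs t)) with
      (B / (2 * L) * ((/ 2) ^ n * (/ 2) ^ j) * exp (2 * L * Rabs t) +
       B / L * (/ 2) ^ n * (1 - (/ 2) ^ j) * exp (2 * L * Rabs t)) by (simpl; field; lra).
    lra.
Qed.

Lemma picard_shift_le (n j : nat) (t : R) :
  Rabs (picard (n + j) t - picard n t) <= B / L * exp (2 * L * Rabs t) * (/ 2) ^ n.
Proof.
  eapply Rle_trans; [apply picard_cauchy|].
  pose proof (bound_weight_nonneg t).
  pose proof (pow_lt (/ 2) j ltac:(lra)). pose proof (pow_lt (/ 2) n ltac:(lra)).
  replace (B / L * (/ 2) ^ n * (1 - (/ 2) ^ j) * exp (2 * L * Rabs t)) with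
    (B / L * exp (2 * L * Rabs t) * (/ 2) ^ n * (1 - (/ 2) ^ j)) by ring.
  assert (0 <= B / L * exp (2 * L * Rabs t) * (/ 2) ^ n) by (apply Rmult_le_pos; lra).
  nra.
Qed.

Definition picard_limit (t : R) : R := real (Lim_seq (fun n => picard n t)).

Lemma is_lim_seq_picard (t : R) : is_lim_seq (fun n => picard n t) (picard_limit t).
Proof.
  set (K := B / L * exp (2 * L * Rabs t)).
  assert (HK : 0 <= K) by apply bound_weight_nonneg.
  assert (Hex : ex_finite_lim_seq (fun n => picard n t)).
  { apply ex_lim_seq_cauchy_corr. intros eps.
    destruct (pow_lt_1_zero (/ 2)) with (y := eps / (2 * (K + 1))) as [N HN].
    { rewrite Rabs_right; lra. }
    { apply Rdiv_lt_0_compat; [apply cond_pos | lra]. }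
    exists N. intros n m Hn Hm.
    specialize (HN N (Nat.le_refl N)). rewrite Rabs_right in HN by (apply Rle_ge, pow_le; lra).
    assert (Hn' := picard_shift_le N (n - N) t). assert (Hm' := picard_shift_le N (m - N) t).
    replace (N + (n - N))%nat with n in Hn' by lia. replace (N + (m - N))%nat with m in Hm' by lia.
    fold K in Hn', Hm'.
    replace (picard n t - picard m t) with
      ((picard n t - picard N t) - (picard m t - picard N t)) by ring.
    eapply Rle_lt_trans; [apply Rabs_triang|]. rewrite Rabs_Ropp.
    assert (K * (/ 2) ^ N <= K * (eps / (2 * (K + 1)))) by (apply Rmult_le_compat_l; lra).
    assert (K * (eps / (2 * (K + 1))) = eps / 2 - eps / (2 * (K + 1))) by (field; lra).
    assert (0 < eps / (2 * (K + 1))) by (apply Rdiv_lt_0_compat; [apply cond_pos | lra]).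
    lra. }
  unfold picard_limit. destruct Hex as [l Hl]. rewrite (is_lim_seq_unique _ _ Hl). auto.
Qed.

Lemma picard_limit_dist (n : nat) (t : R) :
  Rabs (picard_limit t - picard n t) <= B / L * exp (2 * L * Rabs t) * (/ 2) ^ n.
Proof.
  change (Rbar_le (Rabs (picard_limit t - picard n t)) (B / L * exp (2 * L * Rabs t) * (/ 2) ^ n)).
  apply (is_lim_seq_le (fun j => Rabs (picard (j + n) t - picard n t))
    (fun _ => B / L * exp (2 * L * Rabs t) * (/ 2) ^ n)).
  - intros j. rewrite Nat.add_comm. apply picard_shift_le.
  - apply (is_lim_seq_abs _ (picard_limit t - picard n t)).
    apply is_lim_seq_minus'; [|apply is_lim_seq_const].
    apply (is_lim_seq_incr_n (fun j => picard j t)), is_lim_seq_picard.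
  - apply is_lim_seq_const.
Qed.

Lemma picard_limit_at_0 : picard_limit 0 = x0.
Proof.
  unfold picard_limit.
  rewrite (Lim_seq_ext _ (fun _ => x0)) by (intros; apply picard_at_0).
  now rewrite Lim_seq_const.
Qed.

Lemma picard_remainder_le (n : nat) (t h : R) :
  Rabs (picard (S n) (t + h) - picard (S n) t - F t (picard n t) * h) <=
    (Lu + L * B) * (h * h).
Proof.
  set (c := F t (picard n t)).
  replace (picard (S n) (t + h) - picard (S n) t - c * h) with
    ((picard (S n) (t + h) - c * (t + h)) - (picard (S n) t - c * t)) by ring.
  rewrite <- Rabs_mult_self, <- Rmult_assoc.
  replace (Rabs h) with (Rabs (t + h - t)) at 2 by (f_equal; ring).
  apply (Rabs_sub_le_of_is_derive_le (fun w => picard (S n) w - c * w)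
    (fun w => F w (picard n w) - c)).
  - intros w _. apply (is_derive_minus (picard (S n)) (fun w => c * w)).
    + apply is_derive_picard.
    + auto_derive; auto; ring.
  - intros w Hw. unfold c.
    eapply Rle_trans; [apply F_comp_lipschitz, picard_lipschitz|].
    apply Rmult_le_compat_l;
      [pose proof L_pos; pose proof B_nonneg; pose proof Lu_nonneg; nra|].
    apply Rabs_le. unfold Rmin, Rmax in Hw.
    destruct (Rle_dec t (t + h)); [rewrite Rabs_right | rewrite Rabs_left]; lra.
Qed.

Lemma is_derive_picard_limit (t : R) :
  is_derive picard_limit t (F t (picard_limit t)).
Proof.
  apply (is_derive_of_remainder_le _ _ _ (Lu + L * B)). intros h.
  set (K1 := B / L * exp (2 * L * Rabs (t + h))).
  set (K0 := B / L * exp (2 * L * Rabs t)).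
  apply (le_of_le_geometric _ _ (K1 + K0 + L * Rabs h * K0)). intros n.
  pose proof (picard_remainder_le n t h) as Hrem.
  pose proof (picard_limit_dist (S n) (t + h)) as H1.
  pose proof (picard_limit_dist (S n) t) as H2.
  pose proof (picard_limit_dist n t) as H3.
  fold K1 K0 in H1, H2, H3. simpl pow in H1, H2.
  pose proof (F_lipschitz t (picard_limit t) (picard n t)) as HF.
  assert (HFh : Rabs ((F t (picard_limit t) - F t (picard n t)) * h) <=
                  L * Rabs h * K0 * (/ 2) ^ n).
  { rewrite Rabs_mult.
    replace (L * Rabs h * K0 * (/ 2) ^ n) with (L * (K0 * (/ 2) ^ n) * Rabs h) by ring.
    apply Rmult_le_compat_r; [apply Rabs_pos|].
    eapply Rle_trans; [apply HF|]. apply Rmult_le_compat_l; [pose proof L_pos|]; lra. }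
  replace (picard_limit (t + h) - picard_limit t - F t (picard_limit t) * h) with
    ((picard (S n) (t + h) - picard (S n) t - F t (picard n t) * h)
     + (picard_limit (t + h) - picard (S n) (t + h))
     - (picard_limit t - picard (S n) t)
     - (F t (picard_limit t) - F t (picard n t)) * h) by ring.
  assert (0 <= K1 * (/ 2) ^ n)
    by (apply Rmult_le_pos; [apply bound_weight_nonneg | apply pow_le; lra]).
  apply Rabs_le_between in Hrem, H1, H2, H3, HFh. apply Rabs_le. nra.
Qed.

End Picard.

Lemma sqr_diff_solutions_le_forward (F : R -> R -> R) (L : R) (y1 y2 : R -> R) :
  (forall u x y, Rabs (F u x - F u y) <= L * Rabs (x - y)) ->
  (forall t, is_derive y1 t (F t (y1 t))) -> (forall t, is_derive y2 t (F t (y2 t))) ->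
  forall t, 0 <= t ->
  (y1 t - y2 t) * (y1 t - y2 t) <= (y1 0 - y2 0) * (y1 0 - y2 0) * exp (2 * L * t).
Proof.
  intros HL H1 H2 t Ht.
  set (d := fun t => y1 t - y2 t).
  change (d t * d t <= d 0 * d 0 * exp (2 * L * t)).
  assert (Hw := exp_weighted_le (fun t => d t * d t)
    (fun t => 2 * d t * (F t (y1 t) - F t (y2 t))) (fun u => - (2 * L * u))
    (fun _ => - (2 * L)) 0 t Ht).
  cbv beta in Hw. rewrite Rmult_0_r, Ropp_0, exp_0, Rmult_1_r in Hw.
  assert (Hdt : d t * d t * exp (- (2 * L * t)) <= d 0 * d 0).
  { apply Hw; intros s _.
    - apply is_derive_sqr, (is_derive_minus y1 y2); auto.
    - auto_derive; auto; ring.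
    - specialize (HL s (y1 s) (y2 s)). fold (d s) in HL.
      pose proof (Rle_abs (d s * (F s (y1 s) - F s (y2 s)))) as Habs.
      rewrite Rabs_mult in Habs. rewrite <- (Rabs_mult_self (d s)).
      pose proof (Rabs_pos (d s)). nra. }
  replace (d t * d t) with (d t * d t * exp (- (2 * L * t)) * exp (2 * L * t))
    by (rewrite Rmult_assoc, (Rmult_comm (exp _)), exp_mult_exp_opp; ring).
  apply Rmult_le_compat_r; [apply Rlt_le, exp_pos | auto].
Qed.

Lemma sqr_diff_solutions_le (F : R -> R -> R) (L : R) (y1 y2 : R -> R) :
  (forall u x y, Rabs (F u x - F u y) <= L * Rabs (x - y)) ->
  (forall t, is_derive y1 t (F t (y1 t))) -> (forall t, is_derive y2 t (F t (y2 t))) ->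
  forall t, (y1 t - y2 t) * (y1 t - y2 t) <=
            (y1 0 - y2 0) * (y1 0 - y2 0) * exp (2 * L * Rabs t).
Proof.
  intros HL H1 H2 t. destruct (Rle_dec 0 t).
  - rewrite Rabs_right by lra. apply (sqr_diff_solutions_le_forward F); auto.
  - rewrite Rabs_left by lra.
    assert (HLrev : forall u x y, Rabs (- F (- u) x - - F (- u) y) <= L * Rabs (x - y)).
    { intros u x y. rewrite <- Rabs_Ropp.
      replace (- (- F (- u) x - - F (- u) y)) with (F (- u) x - F (- u) y) by ring. apply HL. }
    pose proof (sqr_diff_solutions_le_forward (fun u x => - F (- u) x) L
      (fun u => y1 (- u)) (fun u => y2 (- u)) HLrev
      (fun u => is_derive_reflect y1 u _ (H1 (- u)))
      (fun u => is_derive_reflect y2 u _ (H2 (- u))) (- t) ltac:(lra)) as Hrev.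
    cbv beta in Hrev. now rewrite Ropp_0, Ropp_involutive in Hrev.
Qed.

Lemma periodic_of_return (F : R -> R -> R) (L T : R) (y : R -> R) :
  (forall u x, F (T + u) x = F u x) ->
  (forall u x z, Rabs (F u x - F u z) <= L * Rabs (x - z)) ->
  (forall t, is_derive y t (F t (y t))) -> y T = y 0 -> forall u, y (u + T) = y u.
Proof.
  intros Hper HL Hy Hret u.
  assert (Hshift : forall t, is_derive (fun t => y (T + t)) t (F t (y (T + t)))).
  { intros t. apply is_derive_shift. rewrite <- Hper. apply Hy. }
  pose proof (sqr_diff_solutions_le F L (fun t => y (T + t)) y HL Hshift Hy u) as Hsq.
  cbv beta in Hsq. rewrite Rplus_0_r, Hret, Rminus_eq_0, !Rmult_0_l in Hsq.
  rewrite Rplus_comm. pose proof (Rle_0_sqr (y (T + u) - y u)). unfold Rsqr in *. nra.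
Qed.

(** * A periodic solution *)

Definition box_radius (lam : R) : R := Rabs lam + 3.

Definition clip (K x : R) : R := Rmax (- K) (Rmin K x).

(* The equation with [x] clipped to the box: globally Lipschitz, and equal to the
   original one inside the box, which it leaves forward invariant. *)
Definition rhs_clipped (eps lam u x : R) : R := rhs eps lam u (clip (box_radius lam) x).

Lemma clip_bound (K x : R) : 0 <= K -> Rabs (clip K x) <= K.
Proof.
  intros HK. unfold clip, Rmax, Rmin.
  destruct (Rle_dec K x), (Rle_dec (- K) _); apply Rabs_le; lra.
Qed.

Lemma clip_lipschitz (K x y : R) : 0 <= K -> Rabs (clip K x - clip K y) <= Rabs (x - y).
Proof.
  intros HK. unfold clip, Rmax, Rmin.
  destruct (Rle_dec K x), (Rle_dec K y);
  repeat match goal with |- context [Rle_dec ?a ?b] => destruct (Rle_dec a b) end;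
  apply Rabs_le; unfold Rabs;
  repeat match goal with |- context [Rcase_abs ?a] => destruct (Rcase_abs a) end; lra.
Qed.

Lemma clip_id (K x : R) : Rabs x <= K -> clip K x = x.
Proof.
  intros H. apply Rabs_le_between in H. unfold clip, Rmax, Rmin.
  destruct (Rle_dec K x), (Rle_dec (- K) _); lra.
Qed.

Lemma box_radius_ge_3 (lam : R) : 3 <= box_radius lam.
Proof. unfold box_radius. pose proof (Rabs_pos lam). lra. Qed.

Lemma mult_Rabs_lipschitz (K a b : R) : Rabs a <= K -> Rabs b <= K ->
  Rabs (a * Rabs a - b * Rabs b) <= 2 * K * Rabs (a - b).
Proof.
  intros Ha Hb. apply Rabs_le_between in Ha, Hb.
  destruct (Rle_dec 0 a), (Rle_dec 0 b), (Rle_dec 0 (a - b));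
    rewrite ?(Rabs_right a), ?(Rabs_left a), ?(Rabs_right b), ?(Rabs_left b),
      ?(Rabs_right (a - b)), ?(Rabs_left (a - b)) by lra;
    apply Rabs_le; split; nra.
Qed.

Lemma cos_lipschitz (u v : R) : Rabs (cos u - cos v) <= Rabs (u - v).
Proof.
  rewrite <- (Rmult_1_l (Rabs (u - v))), Rabs_minus_sym, (Rabs_minus_sym u).
  apply (Rabs_sub_le_of_is_derive_le cos (fun t => - sin t)).
  - intros t _. auto_derive; auto; ring.
  - intros t _. rewrite Rabs_Ropp. pose proof (SIN_bound t). apply Rabs_le; lra.
Qed.

Definition rhs_bound (eps lam : R) : R :=
  eps * box_radius lam + 1 + box_radius lam * box_radius lam + Rabs lam.

Lemma Rabs_rhs_le (eps lam u x : R) : 0 <= eps -> Rabs x <= box_radius lam ->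
  Rabs (rhs eps lam u x) <= rhs_bound eps lam.
Proof.
  intros He Hx. unfold rhs, rhs_bound.
  pose proof (COS_bound u). pose proof (Rabs_pos x).
  assert (Hq : Rabs (x * Rabs x) <= box_radius lam * box_radius lam)
    by (rewrite Rabs_mult, Rabs_Rabsolu; nra).
  assert (He' : Rabs (eps * x) <= eps * box_radius lam)
    by (rewrite Rabs_mult, (Rabs_right eps) by lra; nra).
  pose proof (Rle_abs lam). pose proof (Rle_abs (- lam)). rewrite Rabs_Ropp in *.
  apply Rabs_le_between in Hq, He'. apply Rabs_le; lra.
Qed.

Lemma rhs_clipped_bounded (eps lam u x : R) : 0 <= eps ->
  Rabs (rhs_clipped eps lam u x) <= rhs_bound eps lam.
Proof.
  intros He. apply Rabs_rhs_le; auto.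
  apply clip_bound. pose proof (box_radius_ge_3 lam). lra.
Qed.

Lemma rhs_clipped_lipschitz (eps lam u x y : R) : 0 <= eps ->
  Rabs (rhs_clipped eps lam u x - rhs_clipped eps lam u y) <=
    (eps + 2 * box_radius lam) * Rabs (x - y).
Proof.
  intros He. unfold rhs_clipped, rhs.
  pose proof (box_radius_ge_3 lam) as HK.
  set (K := box_radius lam) in *.
  set (cx := clip K x). set (cy := clip K y).
  assert (Hx : Rabs cx <= K) by (apply clip_bound; lra).
  assert (Hy : Rabs cy <= K) by (apply clip_bound; lra).
  assert (Hc : Rabs (cx - cy) <= Rabs (x - y)) by (apply clip_lipschitz; lra).
  pose proof (mult_Rabs_lipschitz _ _ _ Hx Hy) as Hq.
  replace (eps * cx + cos u - cx * Rabs cx + lam - (eps * cy + cos u - cy * Rabs cy + lam))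
    with (eps * (cx - cy) - (cx * Rabs cx - cy * Rabs cy)) by ring.
  eapply Rle_trans; [apply Rabs_triang|].
  rewrite Rabs_Ropp, Rabs_mult, (Rabs_right eps) by lra.
  pose proof (Rabs_pos (cx - cy)). nra.
Qed.

Lemma rhs_clipped_lipschitz_time (eps lam u v x : R) :
  Rabs (rhs_clipped eps lam u x - rhs_clipped eps lam v x) <= 1 * Rabs (u - v).
Proof.
  unfold rhs_clipped, rhs. rewrite Rmult_1_l. set (c := clip (box_radius lam) x).
  replace (eps * c + cos u - c * Rabs c + lam - (eps * c + cos v - c * Rabs c + lam))
    with (cos u - cos v) by ring.
  apply cos_lipschitz.
Qed.

Definition clipped_flow (eps lam x t : R) : R := picard_limit (rhs_clipped eps lam) x t.

Section ClippedFlow.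

Variables (eps lam : R).
Hypothesis eps_bounds : 0 <= eps <= 1.

Lemma clipped_flow_at_0 (x : R) : clipped_flow eps lam x 0 = x.
Proof. apply picard_limit_at_0. Qed.

Lemma is_derive_clipped_flow (x t : R) :
  is_derive (clipped_flow eps lam x) t (rhs_clipped eps lam t (clipped_flow eps lam x t)).
Proof.
  pose proof (box_radius_ge_3 lam).
  apply (is_derive_picard_limit _ (rhs_bound eps lam) (eps + 2 * box_radius lam) 1); intros;
    [lra | apply rhs_clipped_bounded | apply rhs_clipped_lipschitz
    | apply rhs_clipped_lipschitz_time];
    lra.
Qed.

Lemma clipped_flow_dist (x y t : R) :
  Rabs (clipped_flow eps lam x t - clipped_flow eps lam y t) <=
    Rabs (x - y) * exp ((eps + 2 * box_radius lam) * Rabs t).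
Proof.
  apply Rabs_le_of_sqr_le; [apply Rmult_le_pos; [apply Rabs_pos | apply Rlt_le, exp_pos]|].
  eapply Rle_trans.
  - apply (sqr_diff_solutions_le (rhs_clipped eps lam) (eps + 2 * box_radius lam));
      intros; [apply rhs_clipped_lipschitz; lra | apply is_derive_clipped_flow..].
  - rewrite !clipped_flow_at_0, <- Rabs_mult_self.
    replace (2 * (eps + 2 * box_radius lam) * Rabs t) with
      ((eps + 2 * box_radius lam) * Rabs t + (eps + 2 * box_radius lam) * Rabs t) by ring.
    rewrite exp_plus. apply Req_le. ring.
Qed.

Lemma clipped_flow_stays_in_box (x t : R) :
  Rabs x <= box_radius lam -> 0 <= t -> Rabs (clipped_flow eps lam x t) <= box_radius lam.
Proof.
  intros Hx Ht. pose proof (box_radius_ge_3 lam) as HK.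
  set (K := box_radius lam) in *. set (y := clipped_flow eps lam x).
  assert (Hbox : eps * K + 1 - K * K + Rabs lam < 0) by (unfold K, box_radius in *; nra).
  pose proof (Rle_abs lam). pose proof (Rle_abs (- lam)). rewrite Rabs_Ropp in *.
  apply Rabs_le_between in Hx. apply Rabs_le.
  enough (y t <= K /\ - y t <= K) by lra. split.
  - apply (le_of_is_derive_nonpos_above y (fun s => rhs_clipped eps lam s (y s))); auto;
      [intros s _; apply is_derive_clipped_flow | | unfold y; rewrite clipped_flow_at_0; lra].
    intros s _ Hs. unfold rhs_clipped, rhs. fold K.
    replace (clip K (y s)) with K by (unfold clip, Rmin, Rmax;
      destruct (Rle_dec K (y s)), (Rle_dec (- K) K); lra).
    rewrite Rabs_right by lra. pose proof (COS_bound s). nra.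
  - apply (le_of_is_derive_nonpos_above (fun s => - y s)
      (fun s => - rhs_clipped eps lam s (y s))); auto;
      [intros s _; apply (is_derive_opp y), is_derive_clipped_flow
      | | unfold y; rewrite clipped_flow_at_0; lra].
    intros s _ Hs. unfold rhs_clipped, rhs. fold K.
    replace (clip K (y s)) with (- K) by (unfold clip, Rmin, Rmax;
      destruct (Rle_dec K (y s)), (Rle_dec (- K) (y s)); lra).
    rewrite Rabs_Ropp, Rabs_right by lra. pose proof (COS_bound s). nra.
Qed.

(* A fixed point of the period map [x |-> clipped_flow x (2 PI)], found by the
   intermediate value theorem on the invariant box. *)
Lemma exists_period_fixed_point :
  exists x, Rabs x <= box_radius lam /\ clipped_flow eps lam x (2 * PI) = x.
Proof.
  pose proof (box_radius_ge_3 lam) as HK. pose proof PI_RGT_0.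
  set (K := box_radius lam) in *.
  set (period_gap := fun x => clipped_flow eps lam x (2 * PI) - x).
  assert (Hcont : continuity period_gap).
  { intros x. apply (continuity_pt_of_lipschitz _ _
      (exp ((eps + 2 * K) * Rabs (2 * PI)) + 1)).
    intros y. unfold period_gap.
    pose proof (clipped_flow_dist y x (2 * PI)) as Hd.
    replace (clipped_flow eps lam y (2 * PI) - y - (clipped_flow eps lam x (2 * PI) - x)) with
      ((clipped_flow eps lam y (2 * PI) - clipped_flow eps lam x (2 * PI)) - (y - x)) by ring.
    eapply Rle_trans; [apply Rabs_triang|]. rewrite Rabs_Ropp. fold K in Hd. lra. }
  assert (Hbox : forall x, Rabs x <= K -> - K <= clipped_flow eps lam x (2 * PI) <= K).
  { intros x Hx. apply Rabs_le_between, clipped_flow_stays_in_box; auto; lra. }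
  destruct (IVT_cor period_gap (- K) K Hcont) as [xs [Hxs Hfix]]; [lra| |].
  - unfold period_gap.
    assert (H1 := Hbox (- K) ltac:(rewrite Rabs_Ropp, Rabs_right; lra)).
    assert (H2 := Hbox K ltac:(rewrite Rabs_right; lra)). nra.
  - exists xs. split; [apply Rabs_le; lra|]. unfold period_gap in Hfix. lra.
Qed.

End ClippedFlow.

Lemma rhs_periodic (eps lam u x : R) : rhs eps lam (u + 2 * PI) x = rhs eps lam u x.
Proof. unfold rhs. rewrite cos_plus, cos_2PI, sin_2PI. ring. Qed.

Definition periodic_solution (eps lam : R) (b : R -> R) : Prop :=
  (forall u, b (u + 2 * PI) = b u) /\ (forall u, Rabs (b u) <= box_radius lam) /\
  (forall u, is_derive b u (rhs eps lam u (b u))).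

Lemma exists_periodic_solution (eps lam : R) : 0 <= eps <= 1 ->
  exists b, periodic_solution eps lam b.
Proof.
  intros He. pose proof PI_RGT_0.
  destruct (exists_period_fixed_point eps lam He) as [xs [Hxs Hfix]].
  set (b := clipped_flow eps lam xs).
  assert (Hb : forall t, is_derive b t (rhs_clipped eps lam t (b t)))
    by (intros; apply is_derive_clipped_flow; auto).
  assert (Hper : forall u, b (u + 2 * PI) = b u).
  { apply (periodic_of_return (rhs_clipped eps lam) (eps + 2 * box_radius lam)); auto.
    - intros u x. unfold rhs_clipped. now rewrite Rplus_comm, rhs_periodic.
    - intros u x y. apply rhs_clipped_lipschitz; lra.
    - unfold b. now rewrite clipped_flow_at_0. }
  assert (Hbound : forall u, Rabs (b u) <= box_radius lam).
  { intros u. destruct (periodic_reduce b (2 * PI) ltac:(lra) Hper u) as [r [Hr ->]].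
    apply clipped_flow_stays_in_box; auto; lra. }
  exists b. split; [|split]; auto.
  intros u. unfold rhs_clipped in Hb. rewrite <- (clip_id (box_radius lam) (b u)); auto.
Qed.

(** * Hyperbolicity of the periodic solution *)

Section PeriodicSolution.

Variables (eps lam : R) (b : R -> R).
Hypothesis eps_nonneg : 0 <= eps.
Hypothesis b_periodic : periodic_solution eps lam b.

Lemma periodic_solution_lipschitz (u v : R) :
  Rabs (b v - b u) <= rhs_bound eps lam * Rabs (v - u).
Proof.
  destruct b_periodic as (_ & Hbound & Hd).
  apply (Rabs_sub_le_of_is_derive_le b (fun t => rhs eps lam t (b t))); intros t _; auto.
  apply Rabs_rhs_le; auto.
Qed.

Definition abs_integral (u : R) : R := RInt (fun v => Rabs (b v)) 0 u.

Lemma is_derive_abs_integral (u : R) : is_derive abs_integral u (Rabs (b u)).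
Proof.
  apply (is_derive_RInt_0 (fun v => Rabs (b v))). intros z.
  apply continuity_pt_filterlim, (continuity_pt_of_lipschitz _ _ (rhs_bound eps lam)).
  intros y. eapply Rle_trans; [apply Rabs_triang_inv2|]. apply periodic_solution_lipschitz.
Qed.

Lemma abs_integral_at_0 : abs_integral 0 = 0.
Proof. unfold abs_integral. rewrite RInt_point. reflexivity. Qed.

Lemma abs_integral_le (u v : R) : u <= v -> abs_integral u <= abs_integral v.
Proof.
  intros Huv. apply (le_of_is_derive_nonneg abs_integral (fun u => Rabs (b u))); auto.
  - intros t _. apply is_derive_abs_integral.
  - intros t _. apply Rabs_pos.
Qed.

Lemma abs_integral_shift_period (u : R) :
  abs_integral (u + 2 * PI) - abs_integral u = abs_integral (2 * PI).
Proof.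
  destruct b_periodic as (Hper & _).
  set (h := fun u => abs_integral (2 * PI + u) - abs_integral u).
  assert (Hconst : Rabs (h u - h 0) <= 0 * Rabs (u - 0)).
  { apply (Rabs_sub_le_of_is_derive_le h (fun _ => 0)); intros t _; [|rewrite Rabs_R0; lra].
    replace 0 with (Rabs (b (2 * PI + t)) - Rabs (b t)) by (rewrite Rplus_comm, Hper; ring).
    apply (is_derive_minus (fun u => abs_integral (2 * PI + u)) abs_integral).
    - apply is_derive_shift, is_derive_abs_integral.
    - apply is_derive_abs_integral. }
  rewrite Rmult_0_l in Hconst. pose proof (Rabs_pos (h u - h 0)).
  unfold h in Hconst. rewrite Rplus_0_r, abs_integral_at_0, Rplus_comm in Hconst.
  apply Rabs_le_between in Hconst. lra.
Qed.

(* [b - sin - lam t] is [b] minus the integrated forcing; its derivative is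
   [eps b - b |b|]. *)
Lemma forcing_drift_le (M u v : R) : (forall t, Rabs (b t) <= M) -> u <= v ->
  Rabs ((b v - sin v - lam * v) - (b u - sin u - lam * u)) <=
    (eps + M) * abs_integral v - (eps + M) * abs_integral u.
Proof.
  intros HM Huv. destruct b_periodic as (_ & _ & Hd).
  apply (Rabs_sub_le_of_is_derive_dominated (fun t => b t - sin t - lam * t)
    (fun t => eps * b t - b t * Rabs (b t)) (fun t => (eps + M) * abs_integral t)
    (fun t => (eps + M) * Rabs (b t))); auto.
  - intros t _. replace (eps * b t - b t * Rabs (b t)) with
      (rhs eps lam t (b t) - cos t - lam) by (unfold rhs; ring).
    apply (is_derive_minus (fun t => b t - sin t) (fun t => lam * t));
      [apply (is_derive_minus b sin); [auto | auto_derive; auto; ring] | auto_derive; auto; ring].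
  - intros t _. apply (is_derive_scal abs_integral), is_derive_abs_integral.
  - intros t _. specialize (HM t).
    eapply Rle_trans; [apply Rabs_triang|].
    rewrite Rabs_Ropp, !Rabs_mult, Rabs_Rabsolu, (Rabs_right eps) by lra.
    pose proof (Rabs_pos (b t)). nra.
Qed.

Lemma abs_integral_period_ge_of_large_lam :
  eps <= 1 -> 4 <= Rabs lam -> PI <= abs_integral (2 * PI).
Proof.
  intros Heps Hlam. pose proof b_periodic as (Hper & Hbound & _). pose proof PI_RGT_0.
  assert (Hb2PI : b (2 * PI) = b 0) by (rewrite <- (Rplus_0_l (2 * PI)); apply Hper).
  pose proof (forcing_drift_le _ 0 (2 * PI) Hbound ltac:(lra)) as Hperiod.
  rewrite sin_2PI, sin_0, Hb2PI, abs_integral_at_0 in Hperiod.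
  replace (b 0 - 0 - lam * (2 * PI) - (b 0 - 0 - lam * 0)) with (- (2 * PI * lam))
    in Hperiod by ring.
  rewrite Rabs_Ropp, Rabs_mult, (Rabs_right (2 * PI)) in Hperiod by lra.
  assert (0 <= abs_integral (2 * PI))
    by (rewrite <- abs_integral_at_0; apply abs_integral_le; lra).
  unfold box_radius in Hperiod. nra.
Qed.

Lemma exists_Rabs_ge_1_5 : eps <= 1/2 -> exists u, 1/5 <= Rabs (b u).
Proof.
  intros Heps. pose proof b_periodic as (Hper & _ & _). pose proof PI2_3_2. pose proof PI_4.
  destruct (classic (exists u, 1/5 <= Rabs (b u))) as [|Hsmall]; auto. exfalso.
  assert (Hb : forall u, Rabs (b u) <= 1/5).
  { intros u. destruct (Rle_dec (Rabs (b u)) (1/5)); auto. exfalso. apply Hsmall. exists u. lra. }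
  assert (Hslow : forall u v, u <= v ->
                    (eps + 1/5) * abs_integral v - (eps + 1/5) * abs_integral u <= 7/50 * (v - u)).
  { intros u v Huv. rewrite <- Rmult_minus_distr_l.
    pose proof (abs_integral_le u v Huv).
    assert (Hlip : Rabs (abs_integral v - abs_integral u) <= 1/5 * Rabs (v - u)).
    { apply (Rabs_sub_le_of_is_derive_le abs_integral (fun t => Rabs (b t)));
        intros t _; [apply is_derive_abs_integral | rewrite Rabs_Rabsolu; apply Hb]. }
    rewrite !Rabs_right in Hlip by lra. nra. }
  assert (Hb2PI : b (2 * PI) = b 0) by (rewrite <- (Rplus_0_l (2 * PI)); apply Hper).
  pose proof (forcing_drift_le _ 0 (2 * PI) Hb ltac:(lra)) as E1.
  pose proof (forcing_drift_le _ (- (PI / 2)) (PI / 2) Hb ltac:(lra)) as E2.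
  pose proof (Hslow 0 (2 * PI) ltac:(lra)) as S1.
  pose proof (Hslow (- (PI / 2)) (PI / 2) ltac:(lra)) as S2.
  rewrite sin_2PI, sin_0, Hb2PI in E1. rewrite sin_neg, sin_PI2 in E2.
  replace (b 0 - 0 - lam * (2 * PI) - (b 0 - 0 - lam * 0)) with (- (2 * (lam * PI))) in E1
    by ring.
  replace (b (PI / 2) - 1 - lam * (PI / 2) - (b (- (PI / 2)) - - (1) - lam * - (PI / 2)))
    with (b (PI / 2) - b (- (PI / 2)) - 2 - lam * PI) in E2 by field.
  pose proof (Hb (PI / 2)) as Hb1. pose proof (Hb (- (PI / 2))) as Hb2.
  apply Rabs_le_between in E1, E2, Hb1, Hb2. lra.
Qed.

Lemma abs_integral_period_ge_of_Rabs_ge (u1 : R) :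
  eps <= 1/100000 -> Rabs lam < 4 -> 1/5 <= Rabs (b u1) -> 1/5500 <= abs_integral (2 * PI).
Proof.
  intros Heps Hlam Hu1. pose proof PI2_3_2. pose proof PI_4. pose proof (Rabs_pos lam).
  set (w := 1/550).
  assert (Hnear : forall t, u1 <= t <= u1 + w -> 1/10 <= Rabs (b t)).
  { intros t Ht. pose proof (periodic_solution_lipschitz u1 t) as Hlip.
    rewrite (Rabs_right (t - u1)), Rabs_minus_sym in Hlip by lra.
    pose proof (Rabs_triang_inv (b u1) (b t)).
    assert (0 <= rhs_bound eps lam <= 55) by (unfold rhs_bound, box_radius; split; nra).
    unfold w in *. nra. }
  assert (Hgrow : abs_integral u1 - 1/10 * u1 <= abs_integral (u1 + w) - 1/10 * (u1 + w)).
  { apply (le_of_is_derive_nonneg (fun t => abs_integral t - 1/10 * t)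
      (fun t => Rabs (b t) - 1/10));
      [unfold w; lra | | intros t Ht; specialize (Hnear t Ht); lra].
    intros t _. apply (is_derive_minus abs_integral (fun t => 1/10 * t));
      [apply is_derive_abs_integral | auto_derive; auto; ring]. }
  pose proof (abs_integral_le (u1 + w) (u1 + 2 * PI) ltac:(unfold w; lra)).
  pose proof (abs_integral_shift_period u1). unfold w in *. lra.
Qed.

(* The mean of [|b|] over a period is bounded below independently of [lam]: for
   large [|lam|] because the drift [2 PI lam] must be compensated by [b |b|], for
   small [|lam|] because [b] cannot stay small while tracking [sin]. *)
Lemma abs_integral_period_ge : eps <= 1/100000 -> 1/5500 <= abs_integral (2 * PI).
Proof.
  intros Heps. destruct (Rle_dec 4 (Rabs lam)).
  - pose proof (abs_integral_period_ge_of_large_lam ltac:(lra) r). pose proof PI2_3_2. lra.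
  - destruct (exists_Rabs_ge_1_5 ltac:(lra)) as [u1 Hu1].
    apply (abs_integral_period_ge_of_Rabs_ge u1); auto; lra.
Qed.

End PeriodicSolution.

(* [phi] is [4/3] times the primitive of [|b|] minus its linear trend, hence
   periodic and bounded; [g] is positive because the mean of [|b|] exceeds
   [3/2 eps]. *)
Lemma exists_contraction_weight (eps lam : R) (b : R -> R) :
  0 <= eps < 1/100000 -> periodic_solution eps lam b ->
  exists (phi : R -> R) (P g : R), 0 < g /\ (forall u, Rabs (phi u) <= P) /\
    (forall u, is_derive phi u (4/3 * Rabs (b u) - 2 * eps - g)).
Proof.
  intros Heps Hb. pose proof Hb as (_ & Hbound & _).
  pose proof PI2_3_2. pose proof PI_4.
  pose proof (abs_integral_period_ge eps lam b ltac:(lra) Hb ltac:(lra)) as Hlow.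
  set (m := abs_integral b (2 * PI) / (2 * PI)).
  assert (Hm_period : m * (2 * PI) = abs_integral b (2 * PI)) by (unfold m; field; lra).
  assert (Hm : 1/44000 <= m) by nra.
  set (phi := fun u => 4/3 * (abs_integral b u - m * u)).
  assert (Hphi : forall u, is_derive phi u (4/3 * Rabs (b u) - 2 * eps - (4/3 * m - 2 * eps))).
  { intros u. replace (4/3 * Rabs (b u) - 2 * eps - (4/3 * m - 2 * eps)) with
      (4/3 * (Rabs (b u) - m)) by ring.
    apply (is_derive_scal (fun u => abs_integral b u - m * u)).
    apply (is_derive_minus (abs_integral b) (fun u => m * u));
      [apply (is_derive_abs_integral eps lam b ltac:(lra) Hb) | auto_derive; auto; ring]. }
  assert (Hphi_per : forall u, phi (u + 2 * PI) = phi u).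
  { intros u. unfold phi. pose proof (abs_integral_shift_period eps lam b ltac:(lra) Hb u).
    nra. }
  set (D := 4/3 * (box_radius lam + m)).
  exists phi, (D * (2 * PI)), (4/3 * m - 2 * eps). split; [lra|]. split; auto.
  intros u. destruct (periodic_reduce phi (2 * PI) ltac:(lra) Hphi_per u) as [r [Hr ->]].
  replace (phi r) with (phi r - phi 0)
    by (unfold phi; rewrite abs_integral_at_0; ring).
  replace (D * (2 * PI)) with (D * (2 * PI - 0)) by ring.
  eapply Rle_trans.
  - apply (Rabs_sub_le_of_is_derive_le phi
      (fun t => 4/3 * Rabs (b t) - 2 * eps - (4/3 * m - 2 * eps)) 0 r D);
      intros t _; [apply Hphi|].
    replace (4/3 * Rabs (b t) - 2 * eps - (4/3 * m - 2 * eps)) with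
      (4/3 * (Rabs (b t) - m)) by ring.
    rewrite Rabs_mult, (Rabs_right (4/3)) by lra. unfold D. apply Rmult_le_compat_l; [lra|].
    specialize (Hbound t). pose proof (Rabs_pos (b t)). apply Rabs_le; lra.
  - rewrite Rminus_0_r, Rabs_right by lra.
    apply Rmult_le_compat_l; [unfold D; pose proof (box_radius_ge_3 lam); lra | lra].
Qed.

Lemma mult_Rabs_sub_ge (y x : R) :
  2/3 * ((y - x) * (y - x)) * Rabs x <= (y - x) * (y * Rabs y - x * Rabs x).
Proof.
  assert (0 <= (y - x) * (y - x)) by apply Rle_0_sqr.
  assert (0 <= y * y + 2/3 * y * x + x * x / 3)
    by (pose proof (Rle_0_sqr (y + x / 3)); pose proof (Rle_0_sqr x); unfold Rsqr in *; nra).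
  destruct (Rle_dec 0 y), (Rle_dec 0 x);
    rewrite ?(Rabs_right y), ?(Rabs_left y), ?(Rabs_right x), ?(Rabs_left x) by lra.
  - assert (0 <= (y - x) * (y - x) * (y + x / 3)) by (apply Rmult_le_pos; lra). nra.
  - assert (0 <= (y - x) * (y * y + 2/3 * y * x + x * x / 3)) by (apply Rmult_le_pos; lra). nra.
  - assert (0 <= (x - y) * (y * y + 2/3 * y * x + x * x / 3)) by (apply Rmult_le_pos; lra). nra.
  - assert (0 <= (y - x) * (y - x) * (- y - x / 3)) by (apply Rmult_le_pos; lra). nra.
Qed.

Lemma rhs_sub_mul_le (eps lam u y x : R) :
  2 * (y - x) * (rhs eps lam u y - rhs eps lam u x) <=
    (y - x) * (y - x) * (2 * eps - 4/3 * Rabs x).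
Proof. unfold rhs. pose proof (mult_Rabs_sub_ge y x). nra. Qed.

Section Hyperbolicity.

Variables (eps lam : R) (b phi : R -> R) (P g : R).
Hypothesis b_periodic : periodic_solution eps lam b.
Hypothesis g_pos : 0 < g.
Hypothesis phi_bounded : forall u, Rabs (phi u) <= P.
Hypothesis is_derive_phi : forall u, is_derive phi u (4/3 * Rabs (b u) - 2 * eps - g).

(* [exp (phi (s + t) + g t)] grows exactly at the rate [4/3 |b (s + t)| - 2 eps]
   at which [rhs_sub_mul_le] contracts squared distances to the orbit of [b]. *)
Lemma contraction_weighted_le (s a c : R) (w w' : R -> R) :
  a <= c ->
  (forall t, a <= t <= c -> is_derive w t (w' t)) ->
  (forall t, a <= t <= c -> w' t <= w t * (2 * eps - 4/3 * Rabs (b (s + t)))) ->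
  w c * exp (phi (s + c) + g * c) <= w a * exp (phi (s + a) + g * a).
Proof.
  intros Hac Hw Hineq.
  apply (exp_weighted_le w w' (fun t => phi (s + t) + g * t)
    (fun t => 4/3 * Rabs (b (s + t)) - 2 * eps)); auto.
  - intros t _. replace (4/3 * Rabs (b (s + t)) - 2 * eps) with
      ((4/3 * Rabs (b (s + t)) - 2 * eps - g) + g) by ring.
    apply (is_derive_plus (fun t => phi (s + t)) (fun t => g * t));
      [apply is_derive_shift, is_derive_phi | auto_derive; auto; ring].
  - intros t Ht. specialize (Hineq t Ht). lra.
Qed.

Lemma contracting_bounded_eq_0 (s W : R) (w w' : R -> R) :
  (forall t, is_derive w t (w' t)) ->
  (forall t, w' t <= w t * (2 * eps - 4/3 * Rabs (b (s + t)))) ->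
  (forall t, 0 <= w t <= W) -> w 0 = 0.
Proof.
  intros Hw Hineq Hbound.
  assert (H : w 0 * exp (phi s) <= 0).
  { apply (le_0_of_le_exp _ (W * exp P) g g_pos). intros t Ht.
    pose proof (contraction_weighted_le s t 0 w w' Ht (fun t _ => Hw t) (fun t _ => Hineq t))
      as Hle.
    rewrite Rplus_0_r, Rmult_0_r, Rplus_0_r, exp_plus in Hle.
    eapply Rle_trans; [apply Hle|].
    specialize (Hbound t). pose proof (phi_bounded (s + t)) as Hphi.
    apply Rabs_le_between in Hphi. pose proof (exp_le_exp (phi (s + t)) P ltac:(lra)).
    pose proof (exp_pos (phi (s + t))). pose proof (exp_pos (g * t)).
    rewrite <- Rmult_assoc. apply Rmult_le_compat_r; [lra|]. apply Rmult_le_compat; lra. }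
  pose proof (exp_pos (phi s)). specialize (Hbound 0). nra.
Qed.

Lemma is_derive_dist_to_orbit (s : R) (y : R -> R) (t : R) :
  is_derive y t (rhs eps lam (s + t) (y t)) ->
  is_derive (fun t => (y t - b (s + t)) * (y t - b (s + t))) t
    (2 * (y t - b (s + t)) * (rhs eps lam (s + t) (y t) - rhs eps lam (s + t) (b (s + t)))).
Proof.
  intros Hy. pose proof b_periodic as (_ & _ & Hb).
  apply (is_derive_sqr (fun t => y t - b (s + t))).
  apply (is_derive_minus y (fun t => b (s + t))); auto. apply is_derive_shift, Hb.
Qed.

Lemma solution_converges_to_orbit (s : R) (y : R -> R) :
  fwd_solution eps lam s y -> forall t, 0 <= t ->
  Rabs (y t - b (s + t)) <= exp P * exp (- (g / 2) * t) * Rabs (y 0 - b s).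
Proof.
  intros Hy t Ht. set (d := fun t => y t - b (s + t)).
  pose proof (contraction_weighted_le s 0 t (fun t => d t * d t) _ Ht
    (fun t' Ht' => is_derive_dist_to_orbit s y t' (Hy t' (proj1 Ht')))
    (fun t' _ => rhs_sub_mul_le eps lam (s + t') (y t') (b (s + t')))) as Hdecay.
  cbv beta in Hdecay. rewrite Rplus_0_r, Rmult_0_r, Rplus_0_r in Hdecay.
  fold (d t) in Hdecay.
  change (Rabs (d t) <= exp P * exp (- (g / 2) * t) * Rabs (y 0 - b s)).
  replace (y 0 - b s) with (d 0) by (unfold d; now rewrite Rplus_0_r).
  apply Rabs_le_of_sqr_le.
  { apply Rmult_le_pos; [apply Rmult_le_pos; apply Rlt_le, exp_pos | apply Rabs_pos]. }
  pose proof (phi_bounded s) as H0. pose proof (phi_bounded (s + t)) as Ht'.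
  apply Rabs_le_between in H0, Ht'.
  set (E := phi (s + t) + g * t) in Hdecay.
  replace (d t * d t) with (d t * d t * exp E * exp (- E))
    by (rewrite (Rmult_assoc (d t * d t)), exp_mult_exp_opp; ring).
  eapply Rle_trans.
  { apply Rmult_le_compat_r; [apply Rlt_le, exp_pos | apply Hdecay]. }
  rewrite Rmult_assoc, <- exp_plus.
  set (X := exp P * exp (- (g / 2) * t) * Rabs (d 0)).
  replace (X * X) with (d 0 * d 0 * exp (P + P + (- (g / 2) * t + - (g / 2) * t)))
    by (unfold X; rewrite <- Rabs_mult_self, !exp_plus; ring).
  unfold E.
  apply Rmult_le_compat_l; [apply Rle_0_sqr | apply exp_le_exp; lra].
Qed.

Lemma bounded_entire_solution_eq (s : R) (y : R -> R) :
  entire_solution eps lam s y -> (exists M, forall t, Rabs (y t) <= M) -> y 0 = b s.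
Proof.
  intros Hy [M HM]. pose proof b_periodic as (_ & Hbound & _).
  set (d := fun t => y t - b (s + t)).
  assert (Hd0 : d 0 * d 0 = 0).
  { apply (contracting_bounded_eq_0 s ((M + box_radius lam) * (M + box_radius lam)) _ _
      (fun t => is_derive_dist_to_orbit s y t (Hy t))
      (fun t => rhs_sub_mul_le eps lam (s + t) (y t) (b (s + t)))).
    intros t. cbv beta. fold (d t). split; [apply Rle_0_sqr|].
    assert (Rabs (d t) <= M + box_radius lam).
    { unfold d. eapply Rle_trans; [apply Rabs_triang|]. rewrite Rabs_Ropp.
      specialize (HM t). specialize (Hbound (s + t)). lra. }
    rewrite <- Rabs_mult_self. pose proof (Rabs_pos (d t)). nra. }
  apply Rmult_integral in Hd0. unfold d in Hd0. rewrite Rplus_0_r in Hd0. lra.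
Qed.

(* The positive part of [b1 - b] obeys the contracting inequality, so it
   vanishes; equality at a point would be a maximum of [b1 - b] where its
   derivative is [lam1 - lam < 0]. *)
Lemma periodic_solution_lt (lam1 : R) (b1 : R -> R) :
  lam1 < lam -> periodic_solution eps lam1 b1 -> forall s, b1 s < b s.
Proof.
  intros Hlam (_ & Hbound1 & Hd1) s. pose proof b_periodic as (_ & Hbound & Hd).
  set (D := fun t => b1 t - b t).
  assert (HD : forall t, is_derive D t (rhs eps lam1 t (b1 t) - rhs eps lam t (b t)))
    by (intros t; apply (is_derive_minus b1 b); auto).
  assert (Hle : forall s, D s <= 0).
  { intros s'. apply nonpos_of_pos_sqr_le_0. apply Req_le.
    replace s' with (s' + 0) at 1 by ring.
    apply (contracting_bounded_eq_0 s'
      ((box_radius lam1 + box_radius lam) * (box_radius lam1 + box_radius lam))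
      (fun t => pos_sqr (D (s' + t)))
      (fun t => (D (s' + t) + Rabs (D (s' + t))) *
                (rhs eps lam1 (s' + t) (b1 (s' + t)) - rhs eps lam (s' + t) (b (s' + t))))).
    - intros t. apply (is_derive_pos_sqr (fun t => D (s' + t))), is_derive_shift, HD.
    - intros t. set (u := s' + t). destruct (Rle_dec (D u) 0).
      + rewrite pos_sqr_of_nonpos, Rabs_left1 by auto. lra.
      + rewrite pos_sqr_of_nonneg, Rabs_right by lra.
        pose proof (rhs_sub_mul_le eps lam u (b1 u) (b u)) as Hkey.
        replace (rhs eps lam1 u (b1 u)) with (rhs eps lam u (b1 u) - (lam - lam1))
          by (unfold rhs; ring).
        unfold D in *. nra.
    - intros t. split; [apply pos_sqr_ge_0|]. set (u := s' + t).
      assert (Rabs (D u) <= box_radius lam1 + box_radius lam).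
      { unfold D. eapply Rle_trans; [apply Rabs_triang|]. rewrite Rabs_Ropp.
        specialize (Hbound1 u). specialize (Hbound u). lra. }
      destruct (Rle_dec (D u) 0).
      * rewrite pos_sqr_of_nonpos by auto. pose proof (box_radius_ge_3 lam).
        pose proof (box_radius_ge_3 lam1). nra.
      * rewrite pos_sqr_of_nonneg, <- Rabs_mult_self by lra.
        pose proof (Rabs_pos (D u)). nra. }
  destruct (Rlt_dec (b1 s) (b s)) as [|Hge]; auto. exfalso.
  assert (HDs : D s = 0) by (specialize (Hle s); unfold D in *; lra).
  pose proof (is_derive_eq_0_at_max D s _ (HD s) ltac:(intros; rewrite HDs; apply Hle)) as H0.
  unfold D in HDs. replace (b1 s) with (b s) in H0 by lra. unfold rhs in H0. lra.
Qed.

Lemma in_attractor_iff (s x : R) : in_attractor eps lam s x <-> x = b s.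
Proof.
  pose proof b_periodic as (_ & Hbound & Hd). split.
  - intros [y [Hy [<- Hbdd]]]. apply (bounded_entire_solution_eq s y Hy Hbdd).
  - intros ->. exists (fun t => b (s + t)). split; [|split].
    + intros t. apply is_derive_shift, Hd.
    + now rewrite Rplus_0_r.
    + exists (box_radius lam). intros t. apply Hbound.
Qed.

Lemma lowerb_eq : lowerb eps lam = b.
Proof.
  apply functional_extensionality. intros s. unfold lowerb.
  rewrite (Glb_Rbar_eqset _ (fun x => x = b s)) by apply in_attractor_iff.
  rewrite (is_glb_Rbar_unique _ (b s)); auto.
  split.
  - intros x ->. apply Rle_refl.
  - intros l Hl. now apply Hl.
Qed.

Lemma attr_hyperbolic_periodic_solution : attr_hyperbolic eps lam b.
Proof.
  pose proof b_periodic as (Hper & _ & Hd). split; [split; [|split]|]; auto.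
  - intros s. apply (ex_derive_continuous b s). eexists. apply Hd.
  - intros s t. apply is_derive_shift, Hd.
  - exists 1, (exp P), (g / 2). split; [lra|]. split; [|split; [lra|]].
    + pose proof (Rabs_pos (phi 0)). pose proof (phi_bounded 0).
      pose proof (exp_ineq1_le P). lra.
    + intros s y Hy _. apply solution_converges_to_orbit, Hy.
Qed.

End Hyperbolicity.

(** * The lower boundary of the attractor *)

Lemma periodic_solution_ge (eps lam M : R) (b : R -> R) :
  0 <= eps <= 1 -> periodic_solution eps lam b -> 0 <= M -> M * M + 3 <= lam ->
  forall s, M <= b s.
Proof.
  intros Heps (Hper & _ & Hd) HM Hlam.
  apply (periodic_ge_of_is_derive_pos b (fun u => rhs eps lam u (b u)) (2 * PI));
    auto; [pose proof PI_RGT_0; lra|].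
  intros u Hu. unfold rhs. pose proof (COS_bound u).
  destruct (Rle_dec 0 (b u)); [rewrite Rabs_right | rewrite Rabs_left]; nra.
Qed.

Lemma periodic_solution_le (eps lam M : R) (b : R -> R) :
  0 <= eps <= 1 -> periodic_solution eps lam b -> 0 <= M -> lam <= - (M * M + 3) ->
  forall s, b s <= - M.
Proof.
  intros Heps (Hper & _ & Hd) HM Hlam s.
  enough (M <= - b s) by lra. revert s.
  apply (periodic_ge_of_is_derive_pos (fun u => - b u) (fun u => - rhs eps lam u (b u))
    (2 * PI)); [pose proof PI_RGT_0; lra | intros u; now rewrite Hper
    | intros t; apply (is_derive_opp b), Hd |].
  intros u Hu. unfold rhs. pose proof (COS_bound u).
  destruct (Rle_dec 0 (b u)); [rewrite Rabs_right | rewrite Rabs_left]; nra.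
Qed.

Section LowerBoundary.

Variable eps : R.
Hypothesis eps_small : 0 <= eps < 1/100000.

Lemma exists_hyperbolic_periodic_solution (lam : R) :
  exists (b phi : R -> R) (P g : R), periodic_solution eps lam b /\ 0 < g /\
    (forall u, Rabs (phi u) <= P) /\
    (forall u, is_derive phi u (4/3 * Rabs (b u) - 2 * eps - g)).
Proof.
  destruct (exists_periodic_solution eps lam ltac:(lra)) as [b Hb].
  destruct (exists_contraction_weight eps lam b eps_small Hb) as (phi & P & g & Hg & HP & Hphi).
  now exists b, phi, P, g.
Qed.

Lemma lowerb_periodic_solution (lam : R) : periodic_solution eps lam (lowerb eps lam).
Proof.
  destruct (exists_hyperbolic_periodic_solution lam) as (b & phi & P & g & Hb & Hg & HP & Hphi).
  now rewrite (lowerb_eq eps lam b phi P g).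
Qed.

Lemma lowerb_hyperbolic_attractor (lam : R) :
  attr_hyperbolic eps lam (lowerb eps lam) /\
  (forall s x, in_attractor eps lam s x <-> x = lowerb eps lam s).
Proof.
  destruct (exists_hyperbolic_periodic_solution lam) as (b & phi & P & g & Hb & Hg & HP & Hphi).
  rewrite (lowerb_eq eps lam b phi P g) by auto.
  split; [apply (attr_hyperbolic_periodic_solution eps lam b phi P g)
         | apply (in_attractor_iff eps lam b phi P g)]; auto.
Qed.

Lemma lowerb_lt (lam1 lam2 : R) : lam1 < lam2 -> forall s, lowerb eps lam1 s < lowerb eps lam2 s.
Proof.
  intros Hlam. destruct (exists_hyperbolic_periodic_solution lam2)
    as (b & phi & P & g & Hb & Hg & HP & Hphi).
  rewrite (lowerb_eq eps lam2 b phi P g) by auto.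
  apply (periodic_solution_lt eps lam2 b phi P g Hb Hg HP Hphi lam1); auto.
  apply lowerb_periodic_solution.
Qed.

End LowerBoundary.

Theorem mainTheorem12 :
  exists eps0 : R, 0 < eps0 <= 1 /\
    forall eps : R, 0 <= eps < eps0 ->
      (forall lam : R,
         attr_hyperbolic eps lam (lowerb eps lam) /\
         (forall s x, in_attractor eps lam s x <-> x = lowerb eps lam s)) /\
      (forall lam1 lam2 : R, lam1 < lam2 ->
         forall s, lowerb eps lam1 s < lowerb eps lam2 s) /\
      (forall M : R, exists L : R, forall lam, L <= lam ->
         forall s, M <= lowerb eps lam s) /\
      (forall M : R, exists L : R, forall lam, lam <= L ->
         forall s, lowerb eps lam s <= M).
Proof.
  exists (1/100000). split; [lra|]. intros eps Heps. split; [|split; [|split]].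
  - apply lowerb_hyperbolic_attractor, Heps.
  - apply lowerb_lt, Heps.
  - intros M. exists (Rmax M 0 * Rmax M 0 + 3). intros lam Hlam s.
    apply (Rle_trans _ (Rmax M 0)); [apply Rmax_l|].
    apply (periodic_solution_ge eps lam); [lra | apply lowerb_periodic_solution, Heps
                                          | apply Rmax_r | auto].
  - intros M. exists (- (Rmax (- M) 0 * Rmax (- M) 0 + 3)). intros lam Hlam s.
    apply (Rle_trans _ (- Rmax (- M) 0)); [|pose proof (Rmax_l (- M) 0); lra].
    apply (periodic_solution_le eps lam); [lra | apply lowerb_periodic_solution, Heps
                                          | apply Rmax_r | auto].
Qed.
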